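(* Let $\mathcal{A}$ be a unital $A_\infty$ pre-category, $(A_1,A_2,A_3)$ a transversal triple, and $e_{1,2}\in\mathrm{Mor}(A_1,A_2)$, $e_{2,3}\in\mathrm{Mor}(A_2,A_3)$ quasi-isomorphisms. Then $e_{1,3}=m_2(e_{2,3},e_{1,2})\in\mathrm{Mor}(A_1,A_3)$ is a quasi-isomorphism.
   Context: An $A_\infty$ pre-category consists of a set of objects; for each $k\ge1$ a set of transversal $k$-tuples, such that forgetting entries of a transversal tuple yields a transversal tuple; for each transversal pair $(A,B)$ a $\mathbb{Z}/2$-graded vector space $\mathrm{Mor}(A,B)$; and for each transversal $(A_0,\dots,A_n)$ maps $m_n:\mathrm{Mor}(A_{n-1},A_n)\otimes\cdots\otimes\mathrm{Mor}(A_0,A_1)\to\mathrm{Mor}(A_0,A_n)$ satisfying the $A_\infty$ equations $\sum(-1)^{\maltese_d}m(\dots,m(\dots),\dots)=0$ with $\maltese_d=d+\sum_{i\le d}\deg$. An element $f\in\mathrm{Mor}(A,A')$ with $m_1(f)=0$ is a quasi-isomorphism if $m_2(\cdot,f):\mathrm{Mor}(A',B')\to\mathrm{Mor}(A,B')$ and $m_2(f,\cdot):\mathrm{Mor}(B,A)\to\mathrm{Mor}(B,A')$ induce isomorphisms on $m_1$-homology whenever $(A,A',B')$, resp. $(B,A,A')$, is transversal. The pre-category is unital if for every object $A$ and finite collection of transversal sequences $S_i$ there are objects $A^+,A^-$ quasi-isomorphic to $A$ with all $(A^-,S_i,A^+)$ transversal. *)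

From HB Require Import structures.
From mathcomp Require Import all_boot all_order all_algebra.
Set Implicit Arguments. Unset Strict Implicit. Unset Printing Implicit Defensive.
Import Order.TTheory GRing.Theory Num.Theory.
Local Open Scope ring_scope.

Section Generic.
Variables (K : fieldType) (Obj : Type) (Mor : Obj -> Obj -> lmodType K).

Definition hom := {p : Obj * Obj & Mor p.1 p.2}.
Definition hsrc (h : hom) : Obj := (tag h).1.
Definition htgt (h : hom) : Obj := (tag h).2.
Definition mkhom (A B : Obj) (x : Mor A B) : hom := existT _ (A, B) x.

Fixpoint chainP (A B : Obj) (xs : seq hom) : Prop :=
  match xs with
  | [::] => A = B
  | x :: xs' => hsrc x = A /\ chainP (htgt x) B xs'
  end.

Definition objs (A : Obj) (xs : seq hom) : seq Obj := A :: map htgt xs.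

(* Z/2-grading: [evp] is the projection onto the even part
   (the odd part being its kernel). *)
Variable evp : forall A B, Mor A B -> Mor A B.
Definition hdeg (A B : Obj) (x : Mor A B) (d : bool) : Prop :=
  if d then evp x = 0 else evp x = x.

Fixpoint hom_list (ds : seq bool) (xs : seq hom) : Prop :=
  match ds, xs with
  | [::], [::] => True
  | d :: ds', x :: xs' => hdeg (projT2 x) d /\ hom_list ds' xs'
  | _, _ => False
  end.
End Generic.

(* mu A B [:: x_1; ...; x_n] stands for m_n(x_n, ..., x_1) in Mor(A, B). *)
Record precat (K : fieldType) := Precat {
  Obj : Type;
  transv : seq Obj -> Prop;
  transversal_forget : forall (s : seq Obj) (m : bitseq),
    transv s -> mask m s <> [::] -> transv (mask m s);
  Mor : Obj -> Obj -> lmodType K;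
  evp : forall A B, Mor A B -> Mor A B;
  evp_linear : forall A B (a : K) (u v : Mor A B),
    evp (a *: u + v) = a *: evp u + evp v;
  evp_idem : forall A B (u : Mor A B), evp (evp u) = evp u;
  mu : forall A B : Obj, seq (hom Mor) -> Mor A B;
  mu_multilinear : forall A B (pre post : seq (hom Mor)) (P Q : Obj)
    (a : K) (u v : Mor P Q),
    mu A B (pre ++ mkhom (a *: u + v) :: post) =
      a *: mu A B (pre ++ mkhom u :: post) + mu A B (pre ++ mkhom v :: post);
  (* m_n has degree 2 - n = n (mod 2) *)
  mu_degree : forall A B (xs : seq (hom Mor)) (ds : seq bool),
    (0 < size xs)%N -> chainP A B xs -> transv (objs A xs) ->
    hom_list evp ds xs ->
    hdeg evp (mu A B xs) (odd (count id ds + size xs)%N);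
  (* the A_oo equations, with sign (-1)^(maltese_d),
     maltese_d = d + deg x_1 + ... + deg x_d *)
  mu_ainf : forall A B (xs : seq (hom Mor)) (ds : seq bool),
    (0 < size xs)%N -> chainP A B xs -> transv (objs A xs) ->
    hom_list evp ds xs ->
    let ob i := nth A (objs A xs) i in
    \sum_(d < size xs) \sum_(e < size xs - d)
      ((-1) ^+ (d + count id (take d ds))%N : K) *:
        mu A B (take d xs ++
                mkhom (mu (ob d) (ob (d + e.+1)%N) (take e.+1 (drop d xs)))
                :: drop (d + e.+1)%N xs) = 0
}.

Arguments transv {K} p _.
Arguments mu {K p} A B _.
Arguments Mor {K} p _ _.
Arguments Obj {K} p.

Section Defs.
Variables (K : fieldType) (C : precat K).

Definition m1 (A B : Obj C) (x : Mor C A B) : Mor C A B :=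
  mu A B [:: mkhom x].
Definition m2 (A B D : Obj C) (g : Mor C B D) (f : Mor C A B) : Mor C A D :=
  mu A D [:: mkhom f; mkhom g].

(* phi induces a (well-defined) isomorphism on m_1-homology *)
Definition homology_iso (X Y X' Y' : Obj C) (phi : Mor C X Y -> Mor C X' Y') :=
  [/\ (forall z, m1 z = 0 -> m1 (phi z) = 0),
      (forall y, exists w, phi (m1 y) = m1 w),
      (forall z, m1 z = 0 -> (exists w, phi z = m1 w) -> exists w, z = m1 w)
    & (forall z', m1 z' = 0 -> exists z, m1 z = 0 /\ exists w, z' - phi z = m1 w)].

Definition quasi_iso (A A' : Obj C) (f : Mor C A A') : Prop :=
  [/\ m1 f = 0,
      (forall B' : Obj C, transv C [:: A; A'; B'] ->
         homology_iso (fun x : Mor C A' B' => m2 x f))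
    & (forall B : Obj C, transv C [:: B; A; A'] ->
         homology_iso (fun x : Mor C B A => m2 f x))].

Definition unital_precat : Prop :=
  forall (A : Obj C) (S : seq (seq (Obj C))),
    (forall i, (i < size S)%N -> nth [::] S i <> [::] /\ transv C (nth [::] S i)) ->
    exists (Ap Am : Obj C) (fp : Mor C A Ap) (fm : Mor C Am A),
      [/\ transv C [:: A; Ap], quasi_iso fp,
          transv C [:: Am; A], quasi_iso fm
        & forall i, (i < size S)%N -> transv C (Am :: nth [::] S i ++ [:: Ap])].
End Defs.

From Pilot Require Import Defs.
From HB Require Import structures.
From mathcomp Require Import all_boot all_order all_algebra.
Import GRing.Theory.
Set Implicit Arguments. Unset Strict Implicit. Unset Printing Implicit Defensive.
Local Open Scope ring_scope.

(* Up to the grading involution [twist], m_2 satisfies the Leibniz rule with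
   respect to m_1 and is associative on cycles up to the homotopy m_3.  Hence
   right multiplication by e13 = m_2(e23, e12) is homotopic to right
   multiplication by e23 followed by right multiplication by (twisted) e12,
   and is an isomorphism on homology as soon as the four objects involved form
   a transversal sequence.  For the object B' of the definition this need not
   be so; unitality provides a quasi-isomorphism f : B' -> P such that the
   relevant sequences through P are transversal, and as left multiplication by
   f is an isomorphism on homology, the case of B' follows from that of P by
   cancellation.  Left multiplication is handled symmetrically. *)

Definition boundary (X : Type) (d : X -> X) (y : X) : Prop := exists w, y = d w.

(* [homology_iso phi] of Defs is [homology_iso_for m1 m1 phi] by conversion. *)
Definition homology_iso_for (X Y : zmodType) (dX : X -> X) (dY : Y -> Y) (phi : X -> Y) :=
  [/\ forall z, dX z = 0 -> dY (phi z) = 0,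
      forall y, boundary dY (phi (dX y)),
      forall z, dX z = 0 -> boundary dY (phi z) -> boundary dX z
    & forall z', dY z' = 0 -> exists z, dX z = 0 /\ boundary dY (z' - phi z)].

Lemma boundaryD (X : zmodType) (d : {additive X -> X}) (x y : X) :
  boundary d x -> boundary d y -> boundary d (x + y).
Proof. by move=> [u ->] [v ->]; exists (u + v); rewrite raddfD. Qed.

Lemma boundaryN (X : zmodType) (d : {additive X -> X}) (x : X) :
  boundary d x -> boundary d (- x).
Proof. by move=> [u ->]; exists (- u); rewrite raddfN. Qed.

Section HomologyIsoFor.
Variables (V W U : zmodType).
Variables (dV : {additive V -> V}) (dW : {additive W -> W}) (dU : {additive U -> U}).

Lemma homology_iso_for_eq (phi psi : V -> W) :
  phi =1 psi -> homology_iso_for dV dW phi -> homology_iso_for dV dW psi.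
Proof.
move=> e [cyc bnd inj surj]; split=> [z|y|z|z'].
- by rewrite -e; apply: cyc.
- by rewrite -e.
- by rewrite -e; apply: inj.
- by move=> /surj [z [z0 b]]; exists z; rewrite -e.
Qed.

Lemma homology_iso_for_comp (phi : V -> W) (psi : {additive W -> U}) :
  homology_iso_for dV dW phi -> homology_iso_for dW dU psi ->
  homology_iso_for dV dU (psi \o phi).
Proof.
move=> [cyc1 bnd1 inj1 surj1] [cyc2 bnd2 inj2 surj2]; split=> /=.
- by move=> z /cyc1/cyc2.
- by move=> y; have [w ->] := bnd1 y; apply: bnd2.
- by move=> z z0 b; apply: inj1 => //; apply: inj2 => //; apply: cyc1.
- move=> z'' /surj2 [z' [z'0 [w1 e1]]]; have [z [z0 [w2 e2]]] := surj1 _ z'0.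
  exists z; split=> //; have [w3 e3] := bnd2 w2; exists (w1 + w3).
  by rewrite raddfD -e1 -e3 -e2 raddfB addrA subrK.
Qed.

Lemma homology_iso_for_homotopic (phi psi : V -> W) :
  (forall x, dW (dW x) = 0) ->
  (forall z, dV z = 0 -> boundary dW (psi z - phi z)) ->
  (forall y, boundary dW (psi (dV y))) ->
  homology_iso_for dV dW phi -> homology_iso_for dV dW psi.
Proof.
move=> dW2 htpy bnd [cyc1 _ inj1 surj1]; split=> //.
- move=> z z0; have [w e] := htpy z z0.
  by rewrite -[psi z](subrK (phi z)) raddfD e dW2 cyc1 // add0r.
- move=> z z0 b; apply: inj1 => //.
  have -> : phi z = psi z - (psi z - phi z) by rewrite opprB addrC subrK.
  exact/boundaryD/boundaryN/htpy.
- move=> z' /surj1 [z [z0 b]]; exists z; split=> //.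
  have -> : z' - psi z = (z' - phi z) - (psi z - phi z) by rewrite opprB addrA subrK.
  exact/boundaryD/boundaryN/htpy.
Qed.

Lemma homology_iso_for_cancel (phi : V -> W) (g : {additive W -> U}) :
  (forall z, dV z = 0 -> dW (phi z) = 0) -> (forall y, boundary dW (phi (dV y))) ->
  homology_iso_for dW dU g -> homology_iso_for dV dU (g \o phi) ->
  homology_iso_for dV dW phi.
Proof.
move=> cyc bnd [cyc1 bnd1 inj1 surj1] [_ _ inj2 surj2]; split=> //.
- by move=> z z0 [w e]; apply: inj2 => //=; rewrite e; apply: bnd1.
- move=> z' z'0; have [z [z0 [w e]]] := surj2 _ (cyc1 _ z'0); exists z; split=> //.
  by apply: inj1; [rewrite raddfB z'0 cyc // subrr | exists w; rewrite raddfB].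
Qed.

Lemma homology_iso_for_involution (t : {additive V -> V}) :
  involutive t -> (forall x, dV (t x) = - t (dV x)) -> homology_iso_for dV dV t.
Proof.
move=> tK dt; split.
- by move=> z z0; rewrite dt z0 raddf0 oppr0.
- by move=> y; exists (- t y); rewrite raddfN dt opprK.
- by move=> z _ [w e]; exists (- t w); rewrite raddfN dt opprK -e tK.
- move=> z' z'0; exists (t z'); split; first by rewrite dt z'0 raddf0 oppr0.
  by exists 0; rewrite tK subrr raddf0.
Qed.
End HomologyIsoFor.

Section Precategory.
Variables (K : fieldType) (C : precat K).
Implicit Types A B D E P X : Obj C.
Local Notation homogeneous x d := (hdeg (@evp K C) x d).
Local Notation m1_boundary x := (boundary (@m1 K C _ _) x).

HB.instance Definition _ A B :=
  GRing.isLinear.Build K (Mor C A B) (Mor C A B) *:%R (@evp K C A B) (@evp_linear K C A B).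

HB.instance Definition _ A B :=
  GRing.isLinear.Build K (Mor C A B) (Mor C A B) *:%R (@m1 K C A B)
    (fun a u v => mu_multilinear A B [::] [::] a u v).

HB.instance Definition _ A B D (g : Mor C B D) :=
  GRing.isLinear.Build K (Mor C A B) (Mor C A D) *:%R (@m2 K C A B D g)
    (fun a u v => mu_multilinear A D [::] [:: mkhom g] a u v).

Definition m2r A B D (f : Mor C A B) (g : Mor C B D) : Mor C A D := m2 g f.

HB.instance Definition _ A B D (f : Mor C A B) :=
  GRing.isLinear.Build K (Mor C B D) (Mor C A D) *:%R (@m2r A B D f)
    (fun a u v => mu_multilinear A D [:: mkhom f] [::] a u v).

Lemma m2Dl A B D (f : Mor C A B) (g1 g2 : Mor C B D) : m2 (g1 + g2) f = m2 g1 f + m2 g2 f.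
Proof. exact: (raddfD (m2r f : {additive _ -> _})). Qed.

Lemma m2Nl A B D (f : Mor C A B) (g : Mor C B D) : m2 (- g) f = - m2 g f.
Proof. exact: (raddfN (m2r f : {additive _ -> _})). Qed.

Lemma m20l A B D (f : Mor C A B) : m2 (0 : Mor C B D) f = 0.
Proof. exact: (raddf0 (m2r f : {additive _ -> _})). Qed.

(* The grading involution, identity on even and -1 on odd elements; the signs
   of the A-infinity relations in arities 2 and 3 are expressed through it.  It
   is locked so that rewriting with linearity lemmas does not unfold it. *)
Definition twist A B (x : Mor C A B) : Mor C A B := locked (evp x - (x - evp x)).

Lemma twistE A B (x : Mor C A B) : twist x = evp x - (x - evp x).
Proof. by rewrite /twist -lock. Qed.

Lemma twist_is_linear A B : linear (@twist A B).
Proof.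
have subBE (x y : Mor C A B) : x - (y - x) = x *+ 2 - y by rewrite opprB addrA -mulr2n.
move=> a u v; rewrite !twistE !subBE linearP /= scalerBr -scalerMnr mulrnDl.
by rewrite opprD addrACA.
Qed.

HB.instance Definition _ A B :=
  GRing.isLinear.Build K (Mor C A B) (Mor C A B) *:%R (@twist A B) (@twist_is_linear A B).

Lemma hdeg_evp A B (x : Mor C A B) : homogeneous (evp x) false.
Proof. exact: evp_idem. Qed.

Lemma hdeg_subr_evp A B (x : Mor C A B) : homogeneous (x - evp x) true.
Proof. by rewrite /hdeg linearB /= evp_idem subrr. Qed.

Lemma homogeneous_ind A B (P : Mor C A B -> Prop) :
  (forall x d, homogeneous x d -> P x) -> (forall x y, P x -> P y -> P (x + y)) ->
  forall x, P x.
Proof.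
move=> Phom PD x; rewrite -(subrK (evp x) x) addrC.
by apply: PD; [apply: Phom (hdeg_evp x) | apply: Phom (hdeg_subr_evp x)].
Qed.

Lemma hdeg_twist A B (x : Mor C A B) d : homogeneous x d -> twist x = if d then - x else x.
Proof. by rewrite /hdeg twistE; case: d => ->; rewrite ?sub0r ?subrr ?subr0. Qed.

Lemma twistK A B : involutive (@twist A B).
Proof.
move=> x; have evp_twist : evp (twist x) = evp x.
  by rewrite twistE !linearB /= evp_idem subrr addr0.
by rewrite [twist (twist x)]twistE evp_twist twistE addrAC subrr sub0r opprK addrC subrK.
Qed.

Lemma transv_mask (m : bitseq) (s : seq (Obj C)) :
  transv C s -> (0 < size (mask m s))%N -> transv C (mask m s).
Proof. by move=> Ts m_gt0; apply: transversal_forget => // ms0; rewrite ms0 in m_gt0. Qed.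
Arguments transv_mask m {s}.

Lemma transv_behead (x y : Obj C) (s : seq (Obj C)) :
  transv C (x :: rcons s y) -> transv C (rcons s y).
Proof.
move=> T; have := transv_mask (false :: nseq (size (rcons s y)) true) T.
by rewrite /= mask_true //; apply; rewrite size_rcons.
Qed.

Lemma transv_belast (x y : Obj C) (s : seq (Obj C)) :
  transv C (x :: rcons s y) -> transv C (x :: s).
Proof.
move=> T; have := transv_mask (true :: rcons (nseq (size s) true) false) T.
by rewrite /= -!cats1 mask_cat ?size_nseq // mask_true // cats0; apply.
Qed.

Lemma m1_hdeg A B (x : Mor C A B) d :
  transv C [:: A; B] -> homogeneous x d -> homogeneous (m1 x) (~~ d).
Proof.
move=> T hx.
have := @mu_degree _ C A B [:: mkhom x] [:: d] isT (conj erefl erefl) T (conj hx I).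
by case: d {hx}.
Qed.

Lemma m1_m1 A B (x : Mor C A B) : transv C [:: A; B] -> m1 (m1 x) = 0.
Proof.
move=> T; elim/homogeneous_ind: x => [x d hx | x y]; last first.
  by rewrite !raddfD /= => -> ->; rewrite addr0.
have := @mu_ainf _ C A B [:: mkhom x] [:: d] isT (conj erefl erefl) T (conj hx I).
by rewrite /= !big_ord_recl !big_ord0 /= expr0 scale1r !addr0.
Qed.

Lemma m1_twist A B (x : Mor C A B) : transv C [:: A; B] -> m1 (twist x) = - twist (m1 x).
Proof.
move=> T; elim/homogeneous_ind: x => [x d hx | x y]; last first.
  by rewrite !raddfD /= => -> ->.
rewrite (hdeg_twist hx) (hdeg_twist (m1_hdeg T hx)).
by case: d {hx} => /=; rewrite ?raddfN ?opprK.
Qed.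

Lemma cycle_homogeneous_ind A B : transv C [:: A; B] -> forall P : Mor C A B -> Prop,
  (forall x d, homogeneous x d -> m1 x = 0 -> P x) ->
  (forall x y, P x -> P y -> P (x + y)) ->
  forall x, m1 x = 0 -> P x.
Proof.
move=> T P Phom PD x x0.
have m1_even := m1_hdeg T (hdeg_evp x); have m1_odd := m1_hdeg T (hdeg_subr_evp x).
rewrite /hdeg /= in m1_even m1_odd.
have sum0 : m1 (evp x) + m1 (x - evp x) = 0 by rewrite -raddfD addrC subrK.
have odd0 : m1 (x - evp x) = 0.
  by have := congr1 (@evp K C A B) sum0; rewrite raddfD /= m1_even m1_odd add0r raddf0.
have even0 : m1 (evp x) = 0 by rewrite -sum0 odd0 addr0.
rewrite -(subrK (evp x) x) addrC.
by apply: PD; [apply: Phom (hdeg_evp x) _ | apply: Phom (hdeg_subr_evp x) _].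
Qed.

Lemma mu_zero_arg X Y P D pre post : mu X Y (pre ++ mkhom (0 : Mor C P D) :: post) = 0.
Proof.
have := mu_multilinear X Y pre post (-1) (0 : Mor C P D) 0.
by rewrite scaler0 addr0 scaleN1r addNr.
Qed.

Lemma scale_sign_m2 A B D (f : Mor C A B) (g : Mor C B D) d :
  homogeneous f d -> (-1) ^+ (1 + d) *: m2 g f = - m2 g (twist f).
Proof.
move=> hf; rewrite (hdeg_twist hf); case: d {hf}; last by rewrite expr1 scaleN1r.
by rewrite raddfN opprK sqrrN expr1n scale1r.
Qed.

Lemma m1_m2_hdeg A B D (f : Mor C A B) (g : Mor C B D) df dg :
  transv C [:: A; B; D] -> homogeneous f df -> homogeneous g dg ->
  m1 (m2 g f) = m2 (m1 g) (twist f) - m2 g (m1 f).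
Proof.
move=> T hf hg.
have := @mu_ainf _ C A D [:: mkhom f; mkhom g] [:: df; dg] isT
  (conj erefl (conj erefl erefl)) T (conj hf (conj hg I)).
rewrite /= !big_ord_recl !big_ord0 /= add0n addn0 expr0 !scale1r !addr0.
rewrite (scale_sign_m2 (m1 g) hf) => /eqP; rewrite subr_eq0 => /eqP <-.
by rewrite addrC addKr.
Qed.

Lemma m1_m2 A B D (f : Mor C A B) (g : Mor C B D) : transv C [:: A; B; D] ->
  m1 (m2 g f) = m2 (m1 g) (twist f) - m2 g (m1 f).
Proof.
move=> T; elim/homogeneous_ind: f g => [f df hf | f1 f2 IH1 IH2] g; last first.
  by rewrite !raddfD /= IH1 IH2 addrACA.
elim/homogeneous_ind: g => [g dg hg | g1 g2 IH1 IH2]; first exact: m1_m2_hdeg hf hg.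
by rewrite m2Dl !raddfD /= IH1 IH2 !m2Dl opprD addrACA.
Qed.

Lemma twist_m2 A B D (f : Mor C A B) (g : Mor C B D) : transv C [:: A; B; D] ->
  twist (m2 g f) = m2 (twist g) (twist f).
Proof.
move=> T; elim/homogeneous_ind: f g => [f df hf | f1 f2 IH1 IH2] g; last first.
  by rewrite !raddfD /= IH1 IH2.
elim/homogeneous_ind: g => [g dg hg | g1 g2 IH1 IH2]; last first.
  by rewrite m2Dl !raddfD /= IH1 IH2 m2Dl.
have := @mu_degree _ C A D [:: mkhom f; mkhom g] [:: df; dg] isT
  (conj erefl (conj erefl erefl)) T (conj hf (conj hg I)) => hm.
rewrite (hdeg_twist hm) (hdeg_twist hf) (hdeg_twist hg).
by case: df dg {hf hg hm} => [] [] /=; rewrite ?raddfN /= ?m2Nl ?opprK.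
Qed.

Lemma m2A_hdeg A B D E (c : Mor C A B) (b : Mor C B D) (a : Mor C D E) dc db da :
  transv C [:: A; B; D; E] -> homogeneous c dc -> homogeneous b db -> homogeneous a da ->
  m1 c = 0 -> m1 b = 0 -> m1 a = 0 ->
  m1_boundary (m2 a (m2 b c) - m2 (m2 a b) (twist c)).
Proof.
(* In the arity-3 relation the terms involving m1 of a cycle vanish, and the
   remaining ones exhibit the associator as the boundary of -m3(c, b, a). *)
move=> T hc hb ha c0 b0 a0.
have := @mu_ainf _ C A E [:: mkhom c; mkhom b; mkhom a] [:: dc; db; da] isT
  (conj erefl (conj erefl (conj erefl erefl))) T (conj hc (conj hb (conj ha I))).
rewrite /= !big_ord_recl !big_ord0 /=.
rewrite (c0 : mu A B [:: mkhom c] = 0) (b0 : mu B D [:: mkhom b] = 0).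
rewrite (a0 : mu D E [:: mkhom a] = 0).
rewrite !(mu_zero_arg _ _ _ _ [::]) !(mu_zero_arg _ _ _ _ [:: _]) !(mu_zero_arg _ _ _ _ [:: _; _]).
rewrite !scaler0 !add0r !addr0 !addn0 expr0 !scale1r; change (bump 0 0) with 1%N.
rewrite (scale_sign_m2 (m2 a b) hc) => /eqP; rewrite addrAC addr_eq0 => /eqP ->.
by exists (- mu A E [:: mkhom c; mkhom b; mkhom a]); rewrite raddfN.
Qed.

Lemma m2A_boundary A B D E (c : Mor C A B) (b : Mor C B D) (a : Mor C D E) :
  transv C [:: A; B; D; E] -> m1 c = 0 -> m1 b = 0 -> m1 a = 0 ->
  m1_boundary (m2 a (m2 b c) - m2 (m2 a b) (twist c)).
Proof.
move=> T.
have TAB : transv C [:: A; B] := transv_mask [:: true; true; false; false] T isT.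
have TBD : transv C [:: B; D] := transv_mask [:: false; true; true; false] T isT.
have TDE : transv C [:: D; E] := transv_mask [:: false; false; true; true] T isT.
move: c; apply: (cycle_homogeneous_ind TAB) => [c dc hc c0 | c1 c2 IH1 IH2] b0 a0; last first.
  by rewrite !raddfD /= addrACA; apply: boundaryD; [apply: IH1 | apply: IH2].
move: b b0 a0; apply: (cycle_homogeneous_ind TBD) => [b db hb b0 | b1 b2 IH1 IH2] a0; last first.
  rewrite m2Dl !raddfD /= m2Dl opprD addrACA.
  by apply: boundaryD; [apply: IH1 | apply: IH2].
move: a a0; apply: (cycle_homogeneous_ind TDE) => [a da ha a0 | a1 a2 IH1 IH2].
  exact: m2A_hdeg hc hb ha c0 b0 a0.
by rewrite !m2Dl opprD addrACA; apply: boundaryD.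
Qed.

Lemma m1_m2_cycle A B D (f : Mor C A B) (g : Mor C B D) : transv C [:: A; B; D] ->
  m1 f = 0 -> m1 g = 0 -> m1 (m2 g f) = 0.
Proof. by move=> T f0 g0; rewrite m1_m2 // f0 g0 m20l raddf0 subr0. Qed.

Lemma twist_cycle A B (x : Mor C A B) : transv C [:: A; B] -> m1 x = 0 -> m1 (twist x) = 0.
Proof. by move=> T x0; rewrite m1_twist // x0 raddf0 oppr0. Qed.

Lemma boundary_m2r A B D (f : Mor C A B) (x : Mor C B D) : transv C [:: A; B; D] ->
  m1 f = 0 -> m1_boundary x -> m1_boundary (m2 x f).
Proof.
move=> T f0 [w ->]; exists (m2 w (twist f)).
have TAB : transv C [:: A; B] := transv_mask [:: true; true; false] T isT.
by rewrite m1_m2 // twistK (twist_cycle TAB f0) raddf0 subr0.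
Qed.

Lemma boundary_m2l A B D (g : Mor C B D) (x : Mor C A B) : transv C [:: A; B; D] ->
  m1 g = 0 -> m1_boundary x -> m1_boundary (m2 g x).
Proof.
by move=> T g0 [w ->]; exists (- m2 g w); rewrite raddfN /= m1_m2 // g0 m20l sub0r opprK.
Qed.

Lemma homology_iso_twist A B : transv C [:: A; B] -> homology_iso (@twist A B).
Proof.
by move=> T; apply: homology_iso_for_involution => x; [apply: twistK | apply: m1_twist].
Qed.

Lemma homology_iso_m2r_twist A B D (f : Mor C A B) : transv C [:: A; B; D] ->
  homology_iso (m2r f : Mor C B D -> _) -> homology_iso (m2r (twist f) : Mor C B D -> _).
Proof.
move=> T hf.
have TAD : transv C [:: A; D] := transv_mask [:: true; false; true] T isT.
have TBD : transv C [:: B; D] := transv_mask [:: false; true; true] T isT.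
apply: (homology_iso_for_eq (phi := @twist A D \o (m2r f \o @twist B D))).
  by move=> y; rewrite /= /m2r twist_m2 // twistK.
apply: homology_iso_for_comp (homology_iso_twist TAD).
exact: homology_iso_for_comp (homology_iso_twist TBD) hf.
Qed.

Lemma homology_iso_m2r_m2 A1 A2 A3 X (e12 : Mor C A1 A2) (e23 : Mor C A2 A3) :
  transv C [:: A1; A2; A3; X] -> quasi_iso e12 -> quasi_iso e23 ->
  homology_iso (m2r (m2 e23 e12) : Mor C A3 X -> _).
Proof.
move=> T [c12 r12 _] [c23 r23 _].
have T1X : transv C [:: A1; X] := transv_mask [:: true; false; false; true] T isT.
have T12X : transv C [:: A1; A2; X] := transv_mask [:: true; true; false; true] T isT.
have T23X : transv C [:: A2; A3; X] := transv_mask [:: false; true; true; true] T isT.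
have T13X : transv C [:: A1; A3; X] := transv_mask [:: true; false; true; true] T isT.
have T123 : transv C [:: A1; A2; A3] := transv_mask [:: true; true; true; false] T isT.
apply: (homology_iso_for_homotopic (phi := m2r (twist e12) \o m2r e23)).
- by move=> x; apply: m1_m1.
- by move=> z z0; apply: m2A_boundary.
- by move=> y; apply: boundary_m2r T13X (m1_m2_cycle T123 c12 c23) _; exists y.
- exact: homology_iso_for_comp (r23 X T23X) (homology_iso_m2r_twist T12X (r12 X T12X)).
Qed.

Lemma homology_iso_m2_m2 X A1 A2 A3 (e12 : Mor C A1 A2) (e23 : Mor C A2 A3) :
  transv C [:: X; A1; A2; A3] -> quasi_iso e12 -> quasi_iso e23 ->
  homology_iso (m2 (m2 e23 e12) : Mor C X A1 -> _).
Proof.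
move=> T [c12 _ l12] [c23 _ l23].
have TX1 : transv C [:: X; A1] := transv_mask [:: true; true; false; false] T isT.
have TX3 : transv C [:: X; A3] := transv_mask [:: true; false; false; true] T isT.
have TX12 : transv C [:: X; A1; A2] := transv_mask [:: true; true; true; false] T isT.
have TX23 : transv C [:: X; A2; A3] := transv_mask [:: true; false; true; true] T isT.
have TX13 : transv C [:: X; A1; A3] := transv_mask [:: true; true; false; true] T isT.
have T123 : transv C [:: A1; A2; A3] := transv_mask [:: false; true; true; true] T isT.
apply: (homology_iso_for_homotopic (phi := m2 e23 \o (m2 e12 \o @twist X A1))).
- by move=> x; apply: m1_m1.
- move=> z z0; have := m2A_boundary T (twist_cycle TX1 z0) c12 c23.
  by rewrite twistK => /boundaryN; rewrite opprB.
- by move=> y; apply: boundary_m2l TX13 (m1_m2_cycle T123 c12 c23) _; exists y.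
- apply: homology_iso_for_comp (l23 X TX23).
  exact: homology_iso_for_comp (homology_iso_twist TX1) (l12 X TX12).
Qed.

Lemma homology_iso_m2r_transfer A D B P (e : Mor C A D) (f : Mor C B P) :
  transv C [:: A; D; B; P] -> m1 e = 0 -> quasi_iso f ->
  homology_iso (m2r e : Mor C D P -> _) -> homology_iso (m2r e : Mor C D B -> _).
Proof.
move=> T e0 [f0 _ lf] he.
have TAP : transv C [:: A; P] := transv_mask [:: true; false; false; true] T isT.
have TADB : transv C [:: A; D; B] := transv_mask [:: true; true; true; false] T isT.
have TADP : transv C [:: A; D; P] := transv_mask [:: true; true; false; true] T isT.
have TABP : transv C [:: A; B; P] := transv_mask [:: true; false; true; true] T isT.
have TDBP : transv C [:: D; B; P] := transv_mask [:: false; true; true; true] T isT.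
apply: (homology_iso_for_cancel (g := m2 f : Mor C A B -> _)).
- by move=> z z0; apply: m1_m2_cycle.
- by move=> y; apply: boundary_m2r TADB e0 _; exists y.
- exact: lf A TABP.
apply: (homology_iso_for_homotopic (phi := m2r (twist e) \o m2 f)).
- by move=> x; apply: m1_m1.
- by move=> z z0; apply: m2A_boundary.
- move=> y; apply: boundary_m2l TABP f0 _.
  by apply: boundary_m2r TADB e0 _; exists y.
- exact: homology_iso_for_comp (lf D TDBP) (homology_iso_m2r_twist TADP he).
Qed.

Lemma homology_iso_m2_transfer P B A D (f : Mor C P B) (e : Mor C A D) :
  transv C [:: P; B; A; D] -> quasi_iso f -> m1 e = 0 ->
  homology_iso (m2 e : Mor C P A -> _) -> homology_iso (m2 e : Mor C B A -> _).
Proof.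
move=> T [f0 rf _] e0 he.
have TPB : transv C [:: P; B] := transv_mask [:: true; true; false; false] T isT.
have TPD : transv C [:: P; D] := transv_mask [:: true; false; false; true] T isT.
have TBAD : transv C [:: B; A; D] := transv_mask [:: false; true; true; true] T isT.
have TPBA : transv C [:: P; B; A] := transv_mask [:: true; true; true; false] T isT.
have TPBD : transv C [:: P; B; D] := transv_mask [:: true; true; false; true] T isT.
apply: (homology_iso_for_cancel (g := m2r f : Mor C B D -> Mor C P D)).
- by move=> z z0; apply: m1_m2_cycle.
- by move=> y; apply: boundary_m2l TBAD e0 _; exists y.
- exact: rf D TPBD.
apply: (homology_iso_for_homotopic (phi := m2 e \o m2r (twist f))).
- by move=> x; apply: m1_m1.
- move=> z z0; have := m2A_boundary T (twist_cycle TPB f0) z0 e0.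
  by rewrite twistK => /boundaryN; rewrite opprB.
- move=> y; apply: boundary_m2r TPBD f0 _.
  by apply: boundary_m2l TBAD e0 _; exists y.
- exact: homology_iso_for_comp (homology_iso_m2r_twist TPBA (rf A TPBA)) he.
Qed.

Lemma unital_pair (B x1 x2 : Obj C) (s1 s2 : seq (Obj C)) : unital_precat C ->
  transv C (x1 :: s1) -> transv C (x2 :: s2) ->
  exists P Q (f : Mor C B P) (g : Mor C Q B),
    [/\ quasi_iso f, quasi_iso g,
        transv C (Q :: rcons (x1 :: s1) P) & transv C (Q :: rcons (x2 :: s2) P)].
Proof.
move=> unitC T1 T2.
have [|P [Q [f [g [_ qf _ qg TS]]]]] := unitC B [:: x1 :: s1; x2 :: s2]; first by case=> [|[|]].
by exists P, Q, f, g; rewrite -!cats1; split=> //; [apply: (TS 0%N) | apply: (TS 1%N)].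
Qed.

Lemma unital_right (B x1 x2 : Obj C) (s1 s2 : seq (Obj C)) : unital_precat C ->
  transv C (x1 :: s1) -> transv C (x2 :: s2) ->
  exists P (f : Mor C B P),
    [/\ quasi_iso f, transv C (rcons (x1 :: s1) P) & transv C (rcons (x2 :: s2) P)].
Proof.
move=> unitC T1 T2; have [P [Q [f [_ [qf _ TQ1 TQ2]]]]] := unital_pair B unitC T1 T2.
by exists P, f; split=> //; apply: transv_behead TQ1 || apply: transv_behead TQ2.
Qed.

Lemma unital_left (B x1 x2 : Obj C) (s1 s2 : seq (Obj C)) : unital_precat C ->
  transv C (x1 :: s1) -> transv C (x2 :: s2) ->
  exists Q (g : Mor C Q B), [/\ quasi_iso g, transv C (Q :: x1 :: s1) & transv C (Q :: x2 :: s2)].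
Proof.
move=> unitC T1 T2; have [P [Q [_ [g [_ qg TQ1 TQ2]]]]] := unital_pair B unitC T1 T2.
by exists Q, g; split=> //; apply: transv_belast TQ1 || apply: transv_belast TQ2.
Qed.
End Precategory.

Unset Implicit Arguments. Set Strict Implicit.
Theorem mainTheorem15 (K : fieldType) (C : precat K) (A1 A2 A3 : Obj C)
  (e12 : Mor C A1 A2) (e23 : Mor C A2 A3) :
  unital_precat C -> transv C [:: A1; A2; A3] ->
  quasi_iso e12 -> quasi_iso e23 -> quasi_iso (m2 e23 e12).
Proof.
move=> unitC T q12 q23.
have c13 : m1 (m2 e23 e12) = 0.
  by case: q12 q23 => [c12 _ _] [c23 _ _]; apply: m1_m2_cycle.
split=> // [B TB | B TB].
- have [P [f [qf T1 T2]]] := unital_right B unitC T TB.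
  exact: homology_iso_m2r_transfer T2 c13 qf (homology_iso_m2r_m2 T1 q12 q23).
- have [Q [g [qg T1 T2]]] := unital_left B unitC T TB.
  exact: homology_iso_m2_transfer T2 qg c13 (homology_iso_m2_m2 T1 q12 q23).
Qed.
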